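(* Let $\mathcal{G}$ be a connected $k$-uniform hypergraph with $n$ vertices, and let $\Delta$ be the maximum degree of $\mathcal{G}$. Then $\mathcal{G}$ is a $2$-design if and only if $\alpha_1(\mathcal{G})=\cdots=\alpha_n(\mathcal{G})=\frac{\Delta(k-1)}{n-1}$.
   Context: A $k$-uniform hypergraph $\mathcal{G}$ has vertex set $V(\mathcal{G})=[n]$ and edge set $E(\mathcal{G})$ of $k$-element subsets of $V(\mathcal{G})$; the degree $d_i$ of vertex $i$ is the number of edges containing it. Connectedness: any two vertices are joined by a path $v_0e_1v_1\cdots e_lv_l$ (distinct vertices, distinct edges, $v_{i-1},v_i\in e_i$). A $2$-$(n,b,k,r,\lambda)$ design is regarded as a $k$-uniform $r$-regular hypergraph on $n$ vertices with $b$ edges such that every pair of distinct vertices $x,y$ lies in exactly $\lambda$ common edges; $\mathcal{G}$ is a $2$-design if it is such a design for some parameters. For $\mathbf{x}\in\mathbb{R}^n$, $\mathcal{L}_\mathcal{G}\mathbf{x}^k=\sum_{\{i_1,\ldots,i_k\}\in E(\mathcal{G})}\left(x_{i_1}^k+\cdots+x_{i_k}^k-k\,x_{i_1}\cdots x_{i_k}\right)$; the inverse Perron value of vertex $j$ is $\alpha_j(\mathcal{G})=\min\{\mathcal{L}_\mathcal{G}\mathbf{x}^k : \mathbf{x}\in\mathbb{R}^n_+,\ \sum_{i=1}^n x_i^k=1,\ x_j=0\}$. *)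

From HB Require Import structures.
From mathcomp Require Import all_boot all_order all_algebra.
From mathcomp Require Import reals.
Set Implicit Arguments. Unset Strict Implicit. Unset Printing Implicit Defensive.
Import Order.TTheory GRing.Theory Num.Theory.
Local Open Scope ring_scope.

Definition uniform (n k : nat) (E : {set {set 'I_n}}) : Prop :=
  forall e, e \in E -> #|e| = k.

Definition deg (n : nat) (E : {set {set 'I_n}}) (i : 'I_n) : nat :=
  #|[set e in E | i \in e]|.

Definition maxdeg (n : nat) (E : {set {set 'I_n}}) : nat :=
  (\max_(i < n) deg E i)%N.

(* A path x = v_0 e_1 v_1 ... e_l v_l = y : vs = [:: v_1; ...; v_l],
   es = [:: e_1; ...; e_l]; distinct vertices, distinct edges,
   v_{i-1}, v_i in e_i, e_i an edge. *)
Definition hpath (n : nat) (E : {set {set 'I_n}}) (x y : 'I_n)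
    (vs : seq 'I_n) (es : seq {set 'I_n}) : Prop :=
  [/\ size es = size vs, uniq (x :: vs), uniq es, last x vs = y &
      forall i, (i < size es)%N ->
        [/\ nth set0 es i \in E,
            nth x (x :: vs) i \in nth set0 es i &
            nth x (x :: vs) i.+1 \in nth set0 es i]].

Definition hconnected (n : nat) (E : {set {set 'I_n}}) : Prop :=
  forall x y : 'I_n, exists vs es, hpath E x y vs es.

Definition is_2design (n : nat) (E : {set {set 'I_n}}) : Prop :=
  exists r lam : nat,
    (forall i, deg E i = r) /\
    (forall x y : 'I_n, x != y -> #|[set e in E | (x \in e) && (y \in e)]| = lam).

Definition lapk (R : realType) (n k : nat) (E : {set {set 'I_n}})
    (x : 'I_n -> R) : R :=
  \sum_(e in E) (\sum_(i in e) x i ^+ k - k%:R * \prod_(i in e) x i).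

Definition feasible (R : realType) (n k : nat) (j : 'I_n) (x : 'I_n -> R) : Prop :=
  [/\ forall i, 0 <= x i, \sum_(i < n) x i ^+ k = 1 & x j = 0].

Definition is_alpha (R : realType) (n k : nat) (E : {set {set 'I_n}})
    (j : 'I_n) (a : R) : Prop :=
  (exists x, feasible k j x /\ lapk k E x = a) /\
  (forall x, feasible k j x -> a <= lapk k E x).

From HB Require Import structures.
From mathcomp Require Import all_boot all_order all_algebra.
From mathcomp Require Import reals.
From mathcomp Require Import ring lra zify.
Import Order.TTheory GRing.Theory Num.Theory.
Set Implicit Arguments. Unset Strict Implicit. Unset Printing Implicit Defensive.
Local Open Scope ring_scope.

(* For x >= 0 with x_j = 0, the edges through j contribute sum_(i in e) x_i^k to
   L x^k and every other edge contributes a nonnegative AM-GM gap, so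
   L x^k >= sum_i codeg(j, i) x_i^k.  In a 2-design codeg(j, i) = lambda for
   i != j and, by double counting, lambda (n - 1) = r (k - 1); hence
   alpha_j >= lambda, and the all-ones vector vanishing at j attains
   deg(j) (k - 1) / (n - 1).  Conversely, that vector forces every degree to be
   Delta, and raising its entry at a vertex a to 1 + eps shows, to first order
   in eps, that codeg(j, a) >= Delta (k - 1) / (n - 1).  These co-degrees sum to
   (k - 1) Delta over a != j, so they are all equal. *)

Lemma exists_nonneg_rootn (R : rcfType) (k : nat) (z : R) :
  (0 < k)%N -> 0 <= z -> exists2 y : R, 0 <= y & y ^+ k = z.
Proof.
move=> k_gt0 z_ge0.
have z1_ge0 : 0 <= 1 + z by rewrite addr_ge0.
have sign_change : ('X^k - z%:P).[0] <= 0 <= ('X^k - z%:P).[1 + z].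
  rewrite !hornerE expr0n eqn0Ngt k_gt0 sub0r oppr_le0 z_ge0 subr_ge0 /=.
  apply: le_trans (_ : 1 + z <= _); first by rewrite lerDr.
  by rewrite -[leLHS]expr1; apply: ler_weXn2l; rewrite ?lerDl.
have [y /andP[y_ge0 _]] := poly_ivt z1_ge0 sign_change.
by rewrite rootE !hornerE subr_eq0 => /eqP; exists y.
Qed.

Lemma ler_AGM_exp (R : realFieldType) (I : finType) (A : {pred I}) (x : I -> R) :
  {in A, forall i, 0 <= x i} ->
  #|A|%:R * \prod_(i in A) x i <= \sum_(i in A) x i ^+ #|A|.
Proof.
move=> x_ge0; have [->|A_gt0] := posnP #|A|.
  by rewrite mul0r sumr_ge0.
have xk_ge0 : {in A, forall i, 0 <= x i ^+ #|A|} by move=> i /x_ge0 /exprn_ge0.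
have := (leif_AGM xk_ge0).1; rewrite /= prodrXl.
rewrite ler_pXn2r ?nnegrE ?prodr_ge0 ?divr_ge0 ?sumr_ge0 //.
by rewrite ler_pdivlMr ?ltr0n // mulrC.
Qed.

Lemma bernoulli_ler (R : realDomainType) (k : nat) (e : R) :
  0 <= e -> 1 + k%:R * e <= (1 + e) ^+ k.
Proof.
move=> e_ge0; elim: k => [|k IHk]; first by rewrite mul0r addr0 expr0.
have k_ge0 : (0 : R) <= k%:R by rewrite ler0n.
have : 0 <= ((1 + e) ^+ k - (1 + k%:R * e)) * (1 + e).
  by rewrite mulr_ge0 ?subr_ge0 ?addr_ge0.
rewrite exprS -natr1; nra.
Qed.

Lemma exists_quadratic_bound_exp1D (R : realDomainType) (k : nat) :
  exists2 C : R, 0 <= C &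
    forall e, 0 <= e <= 1 -> (1 + e) ^+ k <= 1 + k%:R * e + C * e ^+ 2.
Proof.
elim: k => [|k [C C_ge0 IHk]].
  by exists 0 => // e _; rewrite !mul0r !addr0 expr0.
have k_ge0 : (0 : R) <= k%:R by rewrite ler0n.
exists (k%:R + 2 * C) => [|e /andP[e_ge0 e_le1]]; first by rewrite addr_ge0 ?mulr_ge0.
have := IHk e; rewrite e_ge0 e_le1 => /(_ isT) IHe.
have : 0 <= (1 + k%:R * e + C * e ^+ 2 - (1 + e) ^+ k) * (1 + e).
  by rewrite mulr_ge0 ?subr_ge0 ?addr_ge0.
have : 0 <= C * e ^+ 2 * (1 - e) by rewrite !mulr_ge0 ?subr_ge0 ?exprn_ge0.
rewrite [_ ^+ k.+1]exprS -natr1; nra.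
Qed.

Lemma le0_linear_le_quadratic (R : realFieldType) (a b : R) :
  0 <= b -> (forall e, 0 < e <= 1 -> a * e <= b * e ^+ 2) -> a <= 0.
Proof.
move=> b_ge0 hab; rewrite leNgt; apply/negP => a_gt0.
have ab_gt0 : 0 < a + b by rewrite ltr_pwDl.
pose e := a / (a + b).
have e_gt0 : 0 < e by rewrite divr_gt0.
have e_le1 : e <= 1 by rewrite ler_pdivrMr // mul1r lerDl.
have hae : a * e <= b * e ^+ 2 by apply: hab; rewrite e_gt0 e_le1.
have : a <= b * e by rewrite -(ler_pM2r e_gt0) -mulrA -expr2.
have : e * (a + b) = a by rewrite divfK ?gt_eqF.
nra.
Qed.

Lemma natr_card_setE (R : pzSemiRingType) (T : finType) (A : {pred T}) (P : pred T) :
  #|[set x in A | P x]|%:R = \sum_(x in A) (P x)%:R :> R.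
Proof.
rewrite -sum1_card natr_sum big_mkcond [RHS]big_mkcond /=.
by apply: eq_bigr => x _; rewrite inE; case: (x \in A); case: (P x).
Qed.

Lemma sumr_pred1 (R : pzSemiRingType) (T : finType) (A : {pred T}) (j : T) :
  \sum_(i in A) (i == j)%:R = (j \in A)%:R :> R.
Proof.
have [jA | njA] := boolP (j \in A).
  by rewrite (bigD1 j jA) /= eqxx big1 ?addr0 // => i /andP[_ /negbTE ->].
rewrite big1 // => i iA; have [eij|//] := eqVneq i j.
by rewrite -eij iA in njA.
Qed.

Lemma ord_neq_gt1 (n : nat) (a j : 'I_n) : a != j -> (1 < n)%N.
Proof. by move=> aj; have := max_card (mem [set a; j]); rewrite cards2 aj card_ord. Qed.

Lemma exists_ord_neq (n : nat) (j : 'I_n) : (1 < n)%N -> exists a : 'I_n, a != j.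
Proof.
move=> n_gt1; pose o0 : 'I_n := Ordinal (ltnW n_gt1); pose o1 : 'I_n := Ordinal n_gt1.
by have [->|] := eqVneq j o0; [exists o1 | exists o0; rewrite eq_sym].
Qed.

Lemma hconnected_uniform_gt1 (n k : nat) (E : {set {set 'I_n}}) :
  (1 < n)%N -> uniform k E -> hconnected E -> (1 < k)%N.
Proof.
move=> n_gt1 uE connE.
pose o0 : 'I_n := Ordinal (ltnW n_gt1); pose o1 : 'I_n := Ordinal n_gt1.
have [[|v vs] [es [size_es uniq_vs _ last_vs edges]]] := connE o0 o1.
  by move/(congr1 val): last_vs.
have /edges[eE o0e ve] : (0 < size es)%N by rewrite size_es.
move: uniq_vs; rewrite /= inE negb_or => /andP[/andP[o0v _] _].
rewrite -(uE _ eE); apply: leq_trans (subset_leq_card (_ : [set o0; v] \subset _)).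
  by rewrite cards2 o0v.
by apply/subsetP => z; rewrite !inE => /orP[] /eqP ->.
Qed.

Definition codeg (n : nat) (E : {set {set 'I_n}}) (i j : 'I_n) : nat :=
  #|[set e in E | (i \in e) && (j \in e)]|.

Section Hypergraph.

Variables (n k : nat) (E : {set {set 'I_n}}).
Hypothesis uE : uniform k E.

Lemma codeg_id j : codeg E j j = deg E j.
Proof. by apply: eq_card => e; rewrite !inE andbb. Qed.

Lemma sum_codeg j : (\sum_(a < n) codeg E j a = k * deg E j)%N.
Proof.
rewrite /codeg /deg; under eq_bigr do rewrite -sum1_card; rewrite -sum1_card.
rewrite (exchange_big_dep (mem [set e in E | j \in e])) /=; last first.
  by move=> a e _; rewrite !inE => /andP[-> /andP[]].
rewrite big_distrr /=; apply: eq_bigr => e; rewrite inE => /andP[eE je].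
rewrite muln1 -(uE eE) -sum1_card; apply: eq_bigl => a.
by rewrite !inE eE je.
Qed.

Section Laplacian.

Variable R : realType.
Hypothesis k_gt0 : (0 < k)%N.

Lemma lapk_scale (t : R) (x : 'I_n -> R) :
  lapk k E (fun i => t * x i) = t ^+ k * lapk k E x.
Proof.
rewrite /lapk mulr_sumr; apply: eq_bigr => e eE.
rewrite mulrBr mulr_sumr big_split /= prodr_const (uE eE).
by under eq_bigr do rewrite exprMn; rewrite mulrCA.
Qed.

Lemma feasible_normalize (j : 'I_n) (y : 'I_n -> R) :
  (forall i, 0 <= y i) -> y j = 0 -> 0 < \sum_(i < n) y i ^+ k ->
  exists x, feasible k j x /\ lapk k E x = lapk k E y / \sum_(i < n) y i ^+ k.
Proof.
move=> y_ge0 yj S_gt0.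
have [t t_ge0 tk] : exists2 t : R, 0 <= t & t ^+ k = (\sum_(i < n) y i ^+ k)^-1.
  by apply: exists_nonneg_rootn; rewrite // invr_ge0 ltW.
exists (fun i => t * y i); split; last by rewrite lapk_scale tk mulrC.
split=> [i||]; first exact: mulr_ge0.
- by under eq_bigr do rewrite exprMn; rewrite -mulr_sumr tk mulVf ?gt_eqF.
- by rewrite yj mulr0.
Qed.

Lemma sum_codeg_le_lapk (j : 'I_n) (x : 'I_n -> R) :
  (forall i, 0 <= x i) -> x j = 0 ->
  \sum_(i < n) (codeg E j i)%:R * x i ^+ k <= lapk k E x.
Proof.
move=> x_ge0 xj.
have -> : \sum_(i < n) (codeg E j i)%:R * x i ^+ k =
          \sum_(e in E) (j \in e)%:R * \sum_(i in e) x i ^+ k.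
  rewrite /codeg; under eq_bigr do rewrite natr_card_setE mulr_suml.
  rewrite exchange_big; apply: eq_bigr => e _.
  rewrite mulr_sumr [RHS]big_mkcond; apply: eq_bigr => i _.
  by case: (i \in e); case: (j \in e); rewrite ?mul1r ?mul0r.
apply: ler_sum => e eE; have [je | nje] := boolP (j \in e).
  by rewrite /= mul1r [\prod_(i in e) _](bigD1 j je) /= xj mul0r mulr0 subr0.
by rewrite /= mul0r subr_ge0 -{1 2}(uE eE) ler_AGM_exp.
Qed.

Section BumpVector.

Variables (j a : 'I_n) (u : R).
Hypothesis neq_aj : a != j.

Definition bump_vec (i : 'I_n) : R := if i == j then 0 else if i == a then u else 1.

Lemma bump_vec_exp i : bump_vec i ^+ k = 1 - (i == j)%:R + (i == a)%:R * (u ^+ k - 1).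
Proof.
rewrite /bump_vec; have [->|_] := eqVneq i j.
  by rewrite expr0n eqn0Ngt k_gt0 eq_sym (negbTE neq_aj) /= mul0r addr0 subrr.
by case: eqP => _ /=; rewrite ?expr1n; ring.
Qed.

Lemma sum_bump_vec_exp (A : {set 'I_n}) :
  \sum_(i in A) bump_vec i ^+ k = #|A|%:R - (j \in A)%:R + (a \in A)%:R * (u ^+ k - 1).
Proof.
under eq_bigr do rewrite bump_vec_exp.
by rewrite !big_split /= sumrN -mulr_suml !sumr_pred1 sumr_const.
Qed.

Lemma prod_bump_vec (A : {set 'I_n}) :
  \prod_(i in A) bump_vec i = if j \in A then 0 else if a \in A then u else 1.
Proof.
case: ifPn => [jA | njA]; first by rewrite (bigD1 j jA) /= /bump_vec eqxx mul0r.
have bump1 i : i \in A -> i != a -> bump_vec i = 1.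
  rewrite /bump_vec => iA /negbTE ->; have [eij|//] := eqVneq i j.
  by rewrite -eij iA in njA.
case: ifPn => [aA | naA].
  rewrite (bigD1 a aA) /= big1 => [|i /andP[iA ia]]; last exact: bump1.
  by rewrite /bump_vec (negbTE neq_aj) eqxx mulr1.
by apply: big1 => i iA; apply: bump1 => //; apply: contraNneq naA => <-.
Qed.

Lemma lapk_bump_vec :
  lapk k E bump_vec = (deg E j)%:R * (k%:R - 1) + (deg E a)%:R * (u ^+ k - 1)
                      - ((deg E a)%:R - (codeg E j a)%:R) * (k%:R * (u - 1)).
Proof.
rewrite /deg /codeg !natr_card_setE -sumrB !mulr_suml -!big_split -sumrB /=.
apply: eq_bigr => e eE; rewrite sum_bump_vec_exp prod_bump_vec (uE eE).
by case: (j \in e); case: (a \in e) => /=; ring.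
Qed.

End BumpVector.

Lemma feasible_lapk_deg (j a : 'I_n) : a != j ->
  exists x : 'I_n -> R,
    feasible k j x /\ lapk k E x = (deg E j)%:R * (k%:R - 1) / (n%:R - 1).
Proof.
move=> aj; have n_gt1 := ord_neq_gt1 aj.
have sum_bump : \sum_(i < n) bump_vec j a 1 i ^+ k = n%:R - 1.
  rewrite (eq_bigl [in [set: 'I_n]]) => [|i]; last by rewrite inE.
  by rewrite sum_bump_vec_exp // cardsT card_ord !inE expr1n subrr mulr0 addr0.
have [|||x [fx lx]] := @feasible_normalize j (bump_vec j a 1).
- by move=> i; rewrite /bump_vec; case: ifP => // _; case: ifP.
- by rewrite /bump_vec eqxx.
- by rewrite sum_bump subr_gt0 ltr1n.
exists x; split => //.
by rewrite lx sum_bump lapk_bump_vec // expr1n !subrr !mulr0 subr0 addr0.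
Qed.

Lemma design_is_alpha : (1 < n)%N -> is_2design E ->
  forall j, is_alpha k E j ((maxdeg E)%:R * (k%:R - 1) / (n%:R - 1) : R).
Proof.
move=> n_gt1 [r [lam [degE codegE]]] j.
have {}codegE x y : x != y -> codeg E x y = lam := codegE x y.
have maxdegE : maxdeg E = r.
  apply/anti_leq/andP; split; first by apply/bigmax_leqP => i _; rewrite degE.
  by rewrite -(degE j); apply: leq_bigmax.
have lam_r : (lam * (n - 1) = (k - 1) * r)%N.
  have := sum_codeg j; rewrite (bigD1 j) //= codeg_id degE.
  under eq_bigr => a aj do rewrite codegE 1?eq_sym //.
  rewrite sum_nat_const cardC1 card_ord; nia.
have alphaE : r%:R * (k%:R - 1) / (n%:R - 1) = lam%:R :> R.
  have n1_gt0 : 0 < n%:R - 1 :> R by rewrite subr_gt0 ltr1n.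
  rewrite -[lam%:R](mulfK (lt0r_neq0 n1_gt0)); congr (_ / _).
  have := congr1 (GRing.natmul (1 : R)) lam_r.
  by rewrite !natrM !natrB ?(ltnW n_gt1) // => ->; rewrite mulrC.
rewrite maxdegE alphaE; split.
  have [a aj] := exists_ord_neq j n_gt1; have [x [fx lx]] := feasible_lapk_deg aj.
  by exists x; rewrite lx degE alphaE.
move=> x [x_ge0 x_norm xj]; apply: le_trans (sum_codeg_le_lapk x_ge0 xj).
rewrite -[lam%:R]mulr1 -x_norm mulr_sumr; apply: ler_sum => i _.
have [->|ij] := eqVneq i j; first by rewrite xj expr0n eqn0Ngt k_gt0 !mulr0.
by rewrite codegE // eq_sym.
Qed.

Lemma is_alpha_regular : (1 < n)%N -> (1 < k)%N ->
  (forall j, is_alpha k E j ((maxdeg E)%:R * (k%:R - 1) / (n%:R - 1) : R)) ->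
  forall j, deg E j = maxdeg E.
Proof.
move=> n_gt1 k_gt1 alphaE j; apply/anti_leq/andP; split; first exact: leq_bigmax.
have [a aj] := exists_ord_neq j n_gt1; have [x [fx lx]] := feasible_lapk_deg aj.
have n1_gt0 : 0 < n%:R - 1 :> R by rewrite subr_gt0 ltr1n.
have k1_gt0 : 0 < k%:R - 1 :> R by rewrite subr_gt0 ltr1n.
by move/(_ x fx): (alphaE j).2; rewrite lx ler_pM2r ?invr_gt0 // ler_pM2r // ler_nat.
Qed.

Section Perturbation.

Variables (r : nat) (j a : 'I_n).
Hypotheses (degE : forall i, deg E i = r) (neq_aj : a != j).
Let c : R := r%:R * (k%:R - 1) / (n%:R - 1).
Hypothesis c_le_lapk : forall x, feasible k j x -> c <= lapk k E x.

Lemma lapk_bump_vec_ineq u : 1 <= u ->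
  (r%:R - (codeg E j a)%:R) * (k%:R * (u - 1)) <= (r%:R - c) * (u ^+ k - 1).
Proof.
move=> u_ge1; have n_gt1 := ord_neq_gt1 neq_aj.
have n1_gt0 : 0 < n%:R - 1 :> R by rewrite subr_gt0 ltr1n.
have cE : c * (n%:R - 1) = r%:R * (k%:R - 1) by rewrite divfK ?lt0r_neq0.
have uk_ge1 : 1 <= u ^+ k by rewrite exprn_ege1.
have sum_bump : \sum_(i < n) bump_vec j a u i ^+ k = n%:R - 1 + (u ^+ k - 1).
  rewrite (eq_bigl [in [set: 'I_n]]) => [|i]; last by rewrite inE.
  by rewrite sum_bump_vec_exp // cardsT card_ord !inE mul1r.
have [|||x [fx lx]] := @feasible_normalize j (bump_vec j a u).
- move=> i; rewrite /bump_vec; case: ifP => // _; case: ifP => // _.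
  exact: le_trans u_ge1.
- by rewrite /bump_vec eqxx.
- by rewrite sum_bump; lra.
have := c_le_lapk fx; rewrite lx sum_bump ler_pdivlMr; last by lra.
by rewrite lapk_bump_vec // !degE; lra.
Qed.

Lemma alpha_le_codeg : c <= (codeg E j a)%:R.
Proof.
have [C C_ge0 exp_le] := exists_quadratic_bound_exp1D R k.
have n_gt1 := ord_neq_gt1 neq_aj.
have c_ge0 : 0 <= c by rewrite /c divr_ge0 ?mulr_ge0 ?subr_ge0 ?ler1n // ltnW.
have r_ge0 : (0 : R) <= r%:R by rewrite ler0n.
have kR_gt0 : (0 : R) < k%:R by rewrite ltr0n.
suff : (c - (codeg E j a)%:R) * k%:R <= 0 by rewrite pmulr_lle0 // subr_le0.
apply: (@le0_linear_le_quadratic _ _ (r%:R * C)) => [|e /andP[e_gt0 e_le1]].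
  exact: mulr_ge0.
have e_ge0 := ltW e_gt0.
have := @lapk_bump_vec_ineq (1 + e); rewrite lerDl e_ge0 addrAC subrr add0r.
move=> /(_ isT); have := exp_le e; rewrite e_ge0 e_le1 => /(_ isT).
have := bernoulli_ler k e_ge0.
set P := (1 + e) ^+ k => P_ge P_le ineq.
have : r%:R * (P - 1) <= r%:R * (k%:R * e + C * e ^+ 2) by rewrite ler_wpM2l //; lra.
have : c * (k%:R * e) <= c * (P - 1) by rewrite ler_wpM2l //; lra.
nra.
Qed.

End Perturbation.

Lemma codeg_eq_of_ge (r : nat) (j : 'I_n) (c : R) : (forall i, deg E i = r) ->
  c * (n%:R - 1) = r%:R * (k%:R - 1) ->
  (forall a, a != j -> c <= (codeg E j a)%:R) ->
  forall a, a != j -> (codeg E j a)%:R = c.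
Proof.
move=> degE cE c_le_codeg a aj; have n_gt1 := ord_neq_gt1 aj.
have : \sum_(b | b != j) ((codeg E j b)%:R - c) = 0.
  have := congr1 (GRing.natmul (1 : R)) (sum_codeg j).
  rewrite natr_sum (bigD1 j) //= codeg_id degE natrM => sumE.
  rewrite sumrB sumr_const cardC1 card_ord -mulr_natr -subn1.
  by rewrite natrB ?(ltnW n_gt1) //; lra.
have gap_ge0 b : b != j -> 0 <= (codeg E j b)%:R - c.
  by move=> bj; rewrite subr_ge0 c_le_codeg.
by move/(psumr_eq0P gap_ge0)/(_ a aj)/eqP; rewrite subr_eq0 => /eqP.
Qed.

Lemma is_alpha_design : (1 < n)%N -> (1 < k)%N ->
  (forall j, is_alpha k E j ((maxdeg E)%:R * (k%:R - 1) / (n%:R - 1) : R)) ->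
  is_2design E.
Proof.
move=> n_gt1 k_gt1 alphaE; have degE := is_alpha_regular n_gt1 k_gt1 alphaE.
pose c : R := (maxdeg E)%:R * (k%:R - 1) / (n%:R - 1).
have cE : c * (n%:R - 1) = (maxdeg E)%:R * (k%:R - 1).
  by rewrite divfK // lt0r_neq0 // subr_gt0 ltr1n.
have codegE j a : a != j -> (codeg E j a)%:R = c.
  apply: (codeg_eq_of_ge degE cE) => b bj.
  exact: alpha_le_codeg degE bj (alphaE j).2.
pose o0 : 'I_n := Ordinal (ltnW n_gt1); have [o1 o10] := exists_ord_neq o0 n_gt1.
exists (maxdeg E), (codeg E o0 o1); split => // x y xy.
by apply/eqP; rewrite -(eqr_nat R) (codegE x y) 1?eq_sym // codegE.
Qed.

End Laplacian.

End Hypergraph.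

Unset Implicit Arguments.

Theorem theorem3p8 (R : realType) (n k : nat) (E : {set {set 'I_n}}) :
  (2 <= n)%N -> uniform k E -> hconnected E ->
  (is_2design E <->
   forall j : 'I_n,
     is_alpha k E j ((maxdeg E)%:R * (k%:R - 1) / (n%:R - 1) : R)).
Proof.
move=> n_gt1 uE connE; have k_gt1 := hconnected_uniform_gt1 n_gt1 uE connE.
have k_gt0 := ltnW k_gt1.
split; [exact: design_is_alpha | exact: is_alpha_design].
Qed.
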